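(* Let $m\ge2$, $w$ an infinite periodic or Sturmian word over $\{0,1\}$, and $A=A(m,w)$ with the $\mathbb{Z}_2$-grading in which $z_1^{(1)},a$ are even and $b$ is odd; let $A^\#$ be $A$ with an external unit adjoined (with induced grading). Then $\overline{\exp}^{gr}(A^\#)\le\exp^{gr}(A)+1$.
   Context: $F$ is a field of characteristic zero. $A(m,w)$: basis $\{a,b,z_j^{(i)}: i\ge1,1\le j\le m+w_i\}$, products $z_j^{(i)}a=z_{j+1}^{(i)}$ for $j<m+w_i$, $z_{m+w_i}^{(i)}b=z_1^{(i+1)}$, all other products zero. Grading: $A_0=\mathrm{span}\{a,z_j^{(i)}:i\text{ odd}\}$, $A_1=\mathrm{span}\{b,z_j^{(i)}:i\text{ even}\}$; $A^\#=A\oplus F1$, $A_0^\#=A_0\oplus F1$, $A_1^\#=A_1$. Graded codimension $c_n^{gr}(B)=\sum_k\binom nk c_{k,n-k}(B)$, where $c_{k,n-k}(B)$ is the dimension of the space of polynomials multilinear in even $x_1..x_k$ and odd $y_1..y_{n-k}$ modulo graded identities of $B$; $\overline{\exp}^{gr}(B)=\limsup\sqrt[n]{c_n^{gr}(B)}$ and $\exp^{gr}(B)$ is the limit when it exists (for $A$ it exists and equals $\Phi(1/(m+\pi(w)))$, $\Phi(x)=x^{-x}(1-x)^{-(1-x)}$, $\pi(w)$ the slope of $w$). *)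

From HB Require Import structures.
From mathcomp Require Import all_boot all_order all_algebra.
From Stdlib Require Import ClassicalEpsilon.
From Stdlib Require Reals.
Set Implicit Arguments. Unset Strict Implicit. Unset Printing Implicit Defensive.
Import GRing.Theory.

Definition pb (P : Prop) : bool :=
  if excluded_middle_informative P then true else false.

(* An infinite word w = w_1 w_2 ... over {0,1} is  w : nat -> bool  (w 0 unused). *)
Definition periodic_word (w : nat -> bool) : Prop :=
  exists p, (0 < p)%N /\ forall i, (1 <= i)%N -> w (i + p)%N = w i.

Definition factors (w : nat -> bool) (n : nat) : {set n.-tuple bool} :=
  [set t : n.-tuple bool |
     pb (exists i, (1 <= i)%N /\ t = [tuple w (i + val k)%N | k < n])].

Definition sturmian_word (w : nat -> bool) : Prop :=
  forall n, #|factors w n| = n.+1.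

(* basis of A: a, b, z_j^(i) (only the valid indices (i,j) are used) *)
Inductive bas := Ba | Bb | Bz of nat & nat.

Definition validz (m : nat) (w : nat -> bool) (i j : nat) : bool :=
  (1 <= i)%N && (1 <= j <= m + w i)%N.

Section Alg.
Variable F : fieldType.
Local Open Scope ring_scope.

(* Elements of A^# = A (+) F1 are coordinate functions  option bas -> F,
   None being the coordinate of the adjoined unit 1.  A is the subspace of
   finitely supported vectors with zero None-coordinate. *)

(* product of A on coordinate vectors:
   z_j^(i) a = z_(j+1)^(i) (j < m + w_i),  z_(m+w_i)^(i) b = z_1^(i+1), others 0 *)
Definition mulA (m : nat) (w : nat -> bool) (u v : bas -> F) (c : bas) : F :=
  match c with
  | Ba => 0
  | Bb => 0
  | Bz i j =>
      if (1 <= i)%N && (2 <= j <= m + w i)%N then u (Bz i j.-1) * v Ba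
      else if (2 <= i)%N && (j == 1)%N then u (Bz i.-1 (m + w i.-1)) * v Bb
      else 0
  end.

(* product of A^#: (l,u)(l',v) = (l l', l v + l' u + u v) *)
Definition mulS (m : nat) (w : nat -> bool) (u v : option bas -> F)
  : option bas -> F :=
  fun o => match o with
  | None => u None * v None
  | Some c => u None * v (Some c) + v None * u (Some c)
              + mulA m w (fun c => u (Some c)) (fun c => v (Some c)) c
  end.

(* z-coordinates finitely supported, on valid indices, with upper index
   of the given parity (odd upper index = even component) *)
Definition zsupp (m : nat) (w : nat -> bool) (par : bool) (u : option bas -> F)
  : Prop :=
  exists N, forall i j, u (Some (Bz i j)) != 0 ->
     [&& validz m w i j, odd i == par & (i < N)%N].

(* A_0 = span{a, z_j^(i) : i odd} *)
Definition inA0 m w (u : option bas -> F) : Prop :=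
  u None = 0 /\ u (Some Bb) = 0 /\ zsupp m w true u.
(* A_1 = span{b, z_j^(i) : i even} ;  also A^#_1 = A_1 *)
Definition inA1 m w (u : option bas -> F) : Prop :=
  u None = 0 /\ u (Some Ba) = 0 /\ zsupp m w false u.
(* A^#_0 = A_0 (+) F1 *)
Definition inAs0 m w (u : option bas -> F) : Prop :=
  u (Some Bb) = 0 /\ zsupp m w true u.

End Alg.

(* nonassociative monomials (binary trees) in variables indexed by nat *)
Inductive mono := Leaf of nat | Node of mono & mono.

Fixpoint leaves (t : mono) : seq nat :=
  match t with Leaf i => [:: i] | Node l r => leaves l ++ leaves r end.

Section Codim.
Variable F : fieldType.
Variable I : Type.
Variable mul : (I -> F) -> (I -> F) -> (I -> F).
Variables ev od : (I -> F) -> Prop.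
Local Open Scope ring_scope.

Fixpoint evalm (s : nat -> I -> F) (t : mono) : I -> F :=
  match t with
  | Leaf i => s i
  | Node l r => mul (evalm s l) (evalm s r)
  end.

Definition poly := seq (F * mono).

Definition evalp (s : nat -> I -> F) (p : poly) : I -> F :=
  fun o => \sum_(ct <- p) ct.1 * evalm s ct.2 o.

(* p lies in P_{k,n-k}: multilinear in variables 0..n-1, where variables
   0..k-1 are the even x_1..x_k and k..n-1 the odd y_1..y_{n-k} *)
Definition multilin (n : nat) (p : poly) : bool :=
  all (fun ct => perm_eq (leaves ct.2) (iota 0 n)) p.

Definition graded_subst (k l : nat) (s : nat -> I -> F) : Prop :=
  (forall i, (i < k)%N -> ev (s i)) /\ (forall i, (k <= i < k + l)%N -> od (s i)).

Definition indep_mod_id (k l r : nat) (f : 'I_r -> poly) : Prop :=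
  (forall i, multilin (k + l) (f i)) /\
  forall lam : 'I_r -> F,
    (forall s, graded_subst k l s ->
       forall o, \sum_(i < r) lam i * evalp s (f i) o = 0) ->
    forall i, lam i = 0.

(* d = dim P_{k,l} / (P_{k,l} /\ Id^gr) *)
Definition is_codim (k l d : nat) : Prop :=
  (exists f : 'I_d -> poly, indep_mod_id k l f) /\
  ~ (exists f : 'I_d.+1 -> poly, indep_mod_id k l f).

Definition codim (k l : nat) : nat := epsilon (inhabits 0%N) (is_codim k l).

Definition codim_gr (n : nat) : nat :=
  (\sum_(k < n.+1) 'C(n, k) * codim k (n - k))%N.

End Codim.

Import Reals.
Local Open Scope R_scope.

Definition nroot (n c : nat) : R :=
  if Nat.eqb c 0 then 0 else Rpower (INR c) (/ INR n).

Definition limsup_root_le (c : nat -> nat) (L : R) : Prop :=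
  forall eps, 0 < eps -> exists N, forall n, (N <= n)%nat -> nroot n (c n) <= L + eps.

Definition lim_root (c : nat -> nat) (L : R) : Prop :=
  Un_cv (fun n => nroot n (c n)) L.

(* Multilinearity in the even variables, together with [A^#_0 = A_0 + F 1], shows
   that modulo graded identities an element of [P_{k,l}] is determined by its
   values at substitutions sending each even variable either to [1] or into
   [A_0].  For a fixed set [T] of even variables sent into [A_0], erasing the
   others leaves a polynomial in [#|T|] even and [l] odd variables evaluated on
   [A].  Hence [c_{k,l}(A^#) <= sum_j 'C(k, j) (c_{j,l}(A) + [j + l = 0])], and
   after regrouping the binomials
   [c_n^gr(A^#) <= sum_{k <= n, j <= k} ([t = 0] + 'C(n, t) c_t^gr(A))] with
   [t = j + n - k].  As [c_t^gr(A) <= K (L + eps)^t], this is at most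
   [(1 + K) (n + 1)^2 (1 + L + eps)^n], whose [n]-th root is eventually below
   [L + 1 + 2 eps]. *)

From Pilot Require Import Defs.
From HB Require Import structures.
From mathcomp Require Import all_boot all_order all_algebra.
From Stdlib Require Import Reals Lra Lia ClassicalEpsilon Classical.
From Stdlib Require Import FunctionalExtensionality.
From mathcomp Require Import zify ring.
Set Implicit Arguments. Unset Strict Implicit. Unset Printing Implicit Defensive.
Import GRing.Theory.

Section LinearDependence.
Variable F : fieldType.
Local Open Scope ring_scope.

Lemma nontrivial_relation_of_card_lt (J : finType) r (M : 'I_r -> J -> F) :
  (#|J| < r)%nat ->
  exists2 lam : 'I_r -> F, exists i, lam i != 0
    & forall j, \sum_(i < r) lam i * M i j = 0.
Proof.
move=> ltJr.
pose A : 'M[F]_(r, #|J|) := \matrix_(i < r, j < #|J|) M i (enum_val j).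
have kerA_neq0 : kermx A != 0.
  rewrite kermx_eq0 /row_free; apply/negP => /eqP rkA.
  by have := rank_leq_col A; rewrite rkA leqNgt ltJr.
have [i0 rowi0_neq0] : exists i0, row i0 (kermx A) != 0.
  apply/existsP; apply: contraR kerA_neq0; rewrite negb_exists => /forallP h.
  apply/eqP/matrixP => i j; have /negPn/eqP := h i.
  by move/matrixP => /(_ 0 j); rewrite !mxE.
exists (fun i => kermx A i0 i).
  apply/existsP; apply: contraR rowi0_neq0; rewrite negb_exists => /forallP h.
  by apply/eqP/rowP => j; rewrite [LHS]mxE [RHS]mxE; exact/eqP/negPn/h.
move=> j; have /(congr1 (row i0)) := mulmx_ker A.
rewrite row_mul row0 => /rowP /(_ (enum_rank j)); rewrite [LHS]mxE [RHS]mxE.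
move=> kerA_j; rewrite -[in RHS]kerA_j.
by apply: eq_bigr => i _; rewrite [row _ _ _ _]mxE [A _ _]mxE enum_rankK.
Qed.

End LinearDependence.

Fixpoint eqm (t u : mono) : bool :=
  match t, u with
  | Leaf i, Leaf j => i == j
  | Node a b, Node c d => eqm a c && eqm b d
  | _, _ => false
  end.

Lemma eqmP : Equality.axiom eqm.
Proof.
elim=> [i|a iha b ihb] [j|c d] /=; try by constructor.
  by apply: (iffP eqP) => [->|[]].
apply: (iffP andP) => [[/iha -> /ihb ->]//|[<- <-]].
by split; [apply/iha|apply/ihb].
Qed.

HB.instance Definition _ := hasDecEq.Build mono eqmP.

Fixpoint depth (t : mono) : nat :=
  match t with Leaf _ => 0 | Node l r => (maxn (depth l) (depth r)).+1 end.

Fixpoint small_monos (d n : nat) : seq mono :=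
  match d with
  | 0 => [seq Leaf i | i <- iota 0 n]
  | d'.+1 => small_monos d' n ++
             [seq Node x y | x <- small_monos d' n, y <- small_monos d' n]
  end.

Lemma small_monosW n d d' t :
  (d <= d')%nat -> t \in small_monos d n -> t \in small_monos d' n.
Proof.
elim: d' => [|d' ih]; first by rewrite leqn0 => /eqP ->.
rewrite leq_eqVlt => /orP [/eqP -> //|le_dd'] t_in /=.
by rewrite mem_cat ih.
Qed.

Lemma mem_small_monos n t :
  all (fun i => i < n)%nat (leaves t) -> t \in small_monos (depth t) n.
Proof.
elim: t => [i|l ihl r ihr] /=.
  by rewrite andbT => lt_in; apply/mapP; exists i; rewrite ?mem_iota.
rewrite all_cat => /andP [hl hr]; rewrite mem_cat; apply/orP; right.
apply: allpairs_f.
  exact: small_monosW (leq_maxl _ _) (ihl hl).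
exact: small_monosW (leq_maxr _ _) (ihr hr).
Qed.

Lemma size_leaves_gt0 t : (0 < size (leaves t))%nat.
Proof. by elim: t => [//|l ihl r ihr] /=; rewrite size_cat addn_gt0 ihl. Qed.

Lemma depth_lt_size_leaves t : (depth t < size (leaves t))%nat.
Proof.
elim: t => [//|l ihl r ihr] /=; rewrite size_cat.
by have := size_leaves_gt0 l; have := size_leaves_gt0 r; lia.
Qed.

Section Codimension.
Variables (F : fieldType) (I : Type) (mul : (I -> F) -> (I -> F) -> I -> F).
Variables ev od : (I -> F) -> Prop.
Local Open Scope ring_scope.

Definition coef (p : Defs.poly F) (t : mono) : F :=
  \sum_(ct <- p | ct.2 == t) ct.1.

Lemma coef_cons ct p t :
  coef (ct :: p) t = (if ct.2 == t then ct.1 else 0) + coef p t.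
Proof. by rewrite /coef big_cons; case: ifP; rewrite ?add0r. Qed.

Lemma evalp_coef (ts : seq mono) s (p : Defs.poly F) o : uniq ts ->
  all (fun ct => ct.2 \in ts) p ->
  evalp mul s p o = \sum_(t <- ts) coef p t * evalm mul s t o.
Proof.
move=> uniq_ts; elim: p => [_|ct p ih /= /andP [ct_in p_in]].
  by rewrite /evalp big_nil big1 // => t _; rewrite /coef big_nil mul0r.
rewrite /evalp big_cons -/(evalp mul s p o) ih //.
under eq_bigr do rewrite coef_cons mulrDl.
rewrite big_split /=; congr (_ + _).
rewrite (bigD1_seq ct.2) //= eqxx big1 ?addr0 // => t /negbTE.
by rewrite eq_sym => ->; rewrite mul0r.
Qed.

Lemma multilin_small_monos n (p : Defs.poly F) : multilin n p ->
  all (fun ct => ct.2 \in undup (small_monos n n)) p.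
Proof.
move=> /allP p_ml; apply/allP => ct /p_ml /= perm_ct.
rewrite mem_undup; apply: small_monosW _ (mem_small_monos _).
  have := depth_lt_size_leaves ct.2.
  by rewrite (perm_size perm_ct) size_iota => /ltnW.
by apply/allP => i; rewrite (perm_mem perm_ct) mem_iota.
Qed.

Lemma indep_mod_id_card_le k l r (f : 'I_r -> Defs.poly F) :
  indep_mod_id mul ev od k l f ->
  (r <= size (undup (small_monos (k + l) (k + l))))%nat.
Proof.
move=> [f_ml f_indep]; rewrite leqNgt; apply/negP.
set ts := undup _ => lt_ts_r.
have card_lt : (#|'I_(size ts)| < r)%nat by rewrite card_ord.
have [lam [i0 lam_i0] lam_rel] := nontrivial_relation_of_card_lt
  (fun i (j : 'I_(size ts)) => coef (f i) (nth (Leaf 0) ts j)) card_lt.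
move/eqP: lam_i0; apply; apply: f_indep => s _ o.
under eq_bigr do
  rewrite (@evalp_coef ts) ?undup_uniq ?multilin_small_monos // big_distrr.
rewrite exchange_big /= big_seq big1 // => t t_in.
under eq_bigr do rewrite mulrA.
have t_lt : (index t ts < size ts)%nat by rewrite index_mem.
have := lam_rel (Ordinal t_lt); rewrite /= nth_index // => lam_rel_t.
by rewrite -big_distrl /= lam_rel_t mul0r.
Qed.

Lemma pbE (P : Prop) : pb P <-> P.
Proof. by rewrite /pb; case: excluded_middle_informative. Qed.

Lemma codimP k l : is_codim mul ev od k l (codim mul ev od k l).
Proof.
apply: epsilon_spec.
pose P r := pb (exists f : 'I_r -> Defs.poly F, indep_mod_id mul ev od k l f).
have P0 : exists r, P r.
  by exists 0%nat; apply/pbE; exists (fun _ => [::]); split=> [|lam _] [].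

have P_bounded r : P r -> (r <= size (undup (small_monos (k + l) (k + l))))%nat.
  by move=> /pbE [f]; apply: indep_mod_id_card_le.
case: (ex_maxnP P0 P_bounded) => d /pbE Pd d_max; exists d; split=> // Pd1.
by have := d_max d.+1 (proj2 (pbE _) Pd1); rewrite ltnn.
Qed.

Lemma indep_maximal_span k l d (g : 'I_d -> Defs.poly F) :
  indep_mod_id mul ev od k l g ->
  ~ (exists f : 'I_d.+1 -> Defs.poly F, indep_mod_id mul ev od k l f) ->
  forall h, multilin (k + l) h ->
  exists c : 'I_d -> F, forall s, graded_subst ev od k l s ->
    forall o, evalp mul s h o = \sum_(i < d) c i * evalp mul s (g i) o.
Proof.
move=> [g_ml g_indep] g_max h h_ml.
pose f i := if unlift ord_max i is Some j then g j else h.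
have widen_lift j : widen_ord (leqnSn d) j = lift ord_max j.
  by apply: val_inj; rewrite /= /bump leqNgt ltn_ord.
have f_widen j : f (widen_ord (leqnSn d) j) = g j.
  by rewrite /f widen_lift liftK.
have f_max : f ord_max = h by rewrite /f unlift_none.
have /not_all_ex_not [lam] : ~ forall lam : 'I_d.+1 -> F,
    (forall s, graded_subst ev od k l s ->
       forall o, \sum_(i < d.+1) lam i * evalp mul s (f i) o = 0) ->
    forall i, lam i = 0.
  move=> f_indep; apply: g_max; exists f; split=> // i.
  by rewrite /f; case: unlift.
move=> lam_nontriv; have [lam_rel] := imply_to_and _ _ lam_nontriv.
move=> /not_all_ex_not [i0 lam_i0].
have lam_max : lam ord_max != 0.
  apply/eqP => lam_max; apply: lam_i0.
  have lam_widen j : lam (widen_ord (leqnSn d) j) = 0.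
    apply: (g_indep (fun j => lam (widen_ord (leqnSn d) j))) => s s_gr o.
    have := lam_rel s s_gr o; rewrite big_ord_recr /= lam_max mul0r addr0.
    by under eq_bigr do rewrite f_widen.
  by case: (unliftP ord_max i0) => [j ->|-> //]; rewrite -widen_lift lam_widen.
exists (fun j => - lam (widen_ord (leqnSn d) j) / lam ord_max) => s s_gr o.
have := lam_rel s s_gr o; rewrite big_ord_recr /= f_max.
under eq_bigr do rewrite f_widen.
move=> /eqP; rewrite addrC addr_eq0 => /eqP h_rel.
apply: (mulfI lam_max); rewrite h_rel big_distrr /= -sumrN.
by apply: eq_bigr => j _; field.
Qed.

Lemma codim_le_codim_gr j l :
  ('C(j + l, j) * codim mul ev od j l <= codim_gr mul ev od (j + l))%nat.
Proof.
have lt_j : (j < (j + l).+1)%nat by rewrite ltnS leq_addr.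
rewrite /codim_gr (bigD1 (Ordinal lt_j)) //= addKn; exact: leq_addr.
Qed.

End Codimension.

Fixpoint prune (P : pred nat) (t : mono) : option mono :=
  match t with
  | Leaf i => if P i then Some (Leaf i) else None
  | Node l r =>
      match prune P l, prune P r with
      | Some a, Some b => Some (Node a b)
      | Some a, None => Some a
      | None, x => x
      end
  end.

Fixpoint relabel (g : nat -> nat) (t : mono) : mono :=
  match t with
  | Leaf i => Leaf (g i)
  | Node l r => Node (relabel g l) (relabel g r)
  end.

Lemma leaves_relabel g t : leaves (relabel g t) = map g (leaves t).
Proof. by elim: t => [//|l ihl r ihr] /=; rewrite ihl ihr map_cat. Qed.

Lemma leaves_prune P t :
  if prune P t is Some t' then leaves t' = filter P (leaves t)
  else filter P (leaves t) = [::].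
Proof.
elim: t => [i|l ihl r ihr] /=; first by case: (P i).
rewrite filter_cat.
by case: (prune P l) ihl => [a|] ihl; case: (prune P r) ihr => [b|] ihr /=;
  rewrite ?ihl ?ihr ?cats0.
Qed.

Lemma perm_leaves_prune P t n : perm_eq (leaves t) (iota 0 n) ->
  if prune P t is Some t' then is_true (perm_eq (leaves t') (filter P (iota 0 n)))
  else filter P (iota 0 n) = [::].
Proof.
move=> perm_t; have perm_Pt := perm_filter P perm_t.
have := leaves_prune P t.
case: (prune P t) => [t'|] eq_t'; first by rewrite eq_t'.
by apply/perm_nilP; rewrite perm_sym -eq_t'.
Qed.

Section Evaluation.
Variables (F : fieldType) (I : Type).
Local Open Scope ring_scope.

Definition lincomb (c : F) (x y : I -> F) : I -> F := fun o => c * x o + y o.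

Definition upd (s : nat -> I -> F) v x : nat -> I -> F :=
  fun i => if i == v then x else s i.

Lemma upd_id s v : upd s v (s v) = s.
Proof.
by apply: functional_extensionality => i; rewrite /upd; case: eqP => [->|].
Qed.

Variable mul : (I -> F) -> (I -> F) -> I -> F.

Lemma evalm_relabel s g t :
  evalm mul s (relabel g t) = evalm mul (fun i => s (g i)) t.
Proof. by elim: t => [//|l ihl r ihr] /=; rewrite ihl ihr. Qed.

Lemma eq_evalm s1 s2 t : {in leaves t, s1 =1 s2} ->
  evalm mul s1 t = evalm mul s2 t.
Proof.
elim: t => [i|l ihl r ihr] /= eq_s; first by apply: eq_s; rewrite inE.
by rewrite ihl ?ihr // => i i_in; apply: eq_s; rewrite mem_cat i_in ?orbT.
Qed.

Lemma evalm_upd_notin s v x t :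
  v \notin leaves t -> evalm mul (upd s v x) t = evalm mul s t.
Proof.
move=> v_notin; apply: eq_evalm => i i_in; rewrite /upd; case: eqP => // ei.
by move: v_notin; rewrite -ei i_in.
Qed.

Section Unit.
Variable e : I -> F.
Hypothesis mul1x : forall x, mul e x = x.
Hypothesis mulx1 : forall x, mul x e = x.

Lemma evalm_prune s P t : {in leaves t, forall i, ~~ P i -> s i = e} ->
  evalm mul s t = if prune P t is Some t' then evalm mul s t' else e.
Proof.
elim: t => [i|l ihl r ihr] /= s_e.
  by case: ifP => // /negbT; apply: s_e; rewrite inE.
rewrite ihl ?ihr => [|i i_in|i i_in]; last 2 first.
- by apply: s_e; rewrite mem_cat i_in orbT.
- by apply: s_e; rewrite mem_cat i_in.
by case: (prune P l) => [a|]; case: (prune P r) => [b|] /=; rewrite ?mul1x ?mulx1.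
Qed.

End Unit.

Hypothesis mul_lincombl : forall c x y z,
  mul (lincomb c x y) z = lincomb c (mul x z) (mul y z).
Hypothesis mul_lincombr : forall c x y z,
  mul z (lincomb c x y) = lincomb c (mul z x) (mul z y).

Lemma evalm_upd_lincomb s v c x y t : count_mem v (leaves t) = 1%nat ->
  evalm mul (upd s v (lincomb c x y)) t =
  lincomb c (evalm mul (upd s v x) t) (evalm mul (upd s v y) t).
Proof.
elim: t => [i|l ihl r ihr] /=.
  by rewrite addn0 /upd; case: eqP => // ->; rewrite eqxx.
rewrite count_cat; case cnt_l: (count_mem v (leaves l)) => [|[|n]] //= cnt_r.
  have v_notin : v \notin leaves l by rewrite -has_pred1 has_count cnt_l.
  by rewrite ihr // !(evalm_upd_notin _ _ v_notin) mul_lincombr.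
have {}cnt_r : count_mem v (leaves r) = 0%nat by case: (count_mem v _) cnt_r.
have v_notin : v \notin leaves r by rewrite -has_pred1 has_count cnt_r.
by rewrite ihl // !(evalm_upd_notin _ _ v_notin) mul_lincombl.
Qed.

End Evaluation.

(* The variables kept when the even variables outside [T] are set to [1], and
   their increasing renumbering [0, ..., #|T| + l - 1]. *)
Section Squeeze.
Variables (k l : nat) (T : {set 'I_k}).

Definition memT (i : nat) : bool := [exists x in T, val x == i].
Definition kept (i : nat) : bool := memT i || (k <= i)%nat.
Definition kept_vars : seq nat := filter kept (iota 0 (k + l)).
Definition squeeze (i : nat) : nat := count kept (iota 0 i).
Definition unsqueeze (x : nat) : nat := nth 0%nat kept_vars x.

Lemma memT_ord (x : 'I_k) : memT x = (x \in T).
Proof.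
rewrite /memT; apply/existsP/idP => [[y /andP [y_in /eqP /val_inj <-]] //|x_in].
by exists x; rewrite x_in eqxx.
Qed.

Lemma memT_lt i : memT i -> (i < k)%nat.
Proof. by rewrite /memT => /existsP [x /andP [_ /eqP <-]]; apply: ltn_ord. Qed.

Lemma count_memT : count memT (iota 0 k) = #|T|.
Proof.
rewrite -val_enum_ord count_map cardE /enum_mem size_filter count_filter.
by apply: eq_count => x /=; rewrite andbT memT_ord.
Qed.

Lemma kept_varsE : kept_vars = filter memT (iota 0 k) ++ iota k l.
Proof.
rewrite /kept_vars iotaD filter_cat add0n; congr (_ ++ _).
  apply: eq_in_filter => i; rewrite mem_iota /kept => /andP [_ lt_ik].
  by rewrite leqNgt lt_ik orbF.
rewrite -[RHS]filter_predT; apply: eq_in_filter => i.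
by rewrite mem_iota /kept => /andP [-> _]; rewrite orbT.
Qed.

Lemma size_kept_vars : size kept_vars = (#|T| + l)%nat.
Proof. by rewrite kept_varsE size_cat size_filter count_memT size_iota. Qed.

Lemma map_squeeze n :
  map squeeze (filter kept (iota 0 n)) = iota 0 (count kept (iota 0 n)).
Proof.
elim: n => [//|n ih]; rewrite -addn1 iotaD filter_cat map_cat ih count_cat /=.
rewrite /squeeze add0n; case: (kept n) => /=; last by rewrite !addn0 cats0.
by rewrite addn1 -addn1 iotaD.
Qed.

Lemma squeezeK : {in kept_vars, cancel squeeze unsqueeze}.
Proof.
move=> i i_in; have i_lt : (index i kept_vars < size kept_vars)%nat.
  by rewrite index_mem.
suff -> : squeeze i = index i kept_vars by rewrite /unsqueeze nth_index.
have := nth_map 0%nat 0%nat squeeze i_lt; rewrite nth_index // => <-.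
rewrite /kept_vars map_squeeze nth_iota ?add0n //.
by move: i_lt; rewrite /kept_vars size_filter.
Qed.

Lemma memT_unsqueeze x : (x < #|T|)%nat -> memT (unsqueeze x).
Proof.
move=> lt_x; rewrite /unsqueeze kept_varsE nth_cat size_filter count_memT lt_x.
have : nth 0%nat (filter memT (iota 0 k)) x \in filter memT (iota 0 k).
  by apply: mem_nth; rewrite size_filter count_memT.
by rewrite mem_filter => /andP [].
Qed.

Lemma unsqueeze_odd x :
  (#|T| <= x < #|T| + l)%nat -> (k <= unsqueeze x < k + l)%nat.
Proof.
move=> /andP [le_x lt_x].
rewrite /unsqueeze kept_varsE nth_cat size_filter count_memT ltnNge le_x /=.
by rewrite nth_iota; move: #|T| le_x lt_x => c; lia.
Qed.

End Squeeze.

Lemma sum_set_card k (G : nat -> nat) :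
  (\sum_(T : {set 'I_k}) G #|T| = \sum_(j < k.+1) 'C(k, j) * G j)%nat.
Proof.
have le_card (T : {set 'I_k}) : (#|T| <= k)%nat.
  by rewrite -[X in (_ <= X)%nat]card_ord max_card.
rewrite (partition_big (fun T : {set 'I_k} => inord #|T| : 'I_k.+1) predT) //=.
apply: eq_bigr => j _; rewrite (eq_bigr (fun _ => G j)); last first.
  by move=> T /eqP <-; rewrite inordK // ltnS le_card.
have -> : 'C(k, j) = #|[set A : {set 'I_k} | #|A| == j]|.
  by rewrite card_draws card_ord.
rewrite sum_nat_const; congr (_ * _); apply: eq_card => T.
by rewrite inE unfold_in /= inordK // ltnS le_card.
Qed.

Lemma bin_mul_bin n k j : (j <= k <= n)%nat ->
  ('C(n, k) * 'C(k, j) = 'C(n, j + (n - k)) * 'C(j + (n - k), j))%nat.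
Proof.
move=> /andP [le_jk le_kn].
have fact_gt0 : (0 < j`! * (k - j)`! * (n - k)`!)%nat.
  by rewrite !muln_gt0 !fact_gt0.
apply/eqP; rewrite -(eqn_pmul2r fact_gt0); apply/eqP.
have := bin_fact le_kn; have := bin_fact le_jk.
have := @bin_fact n (j + (n - k)) ltac:(lia).
have := @bin_fact (j + (n - k)) j ltac:(lia).
rewrite (_ : j + (n - k) - j = n - k)%nat; last lia.
rewrite (_ : n - (j + (n - k)) = k - j)%nat; last lia.
move=> e1 e2 e3 e4; transitivity n`!; [rewrite -e4 -e3|rewrite -e2 -e1]; ring.
Qed.

(* [ev1] plays the role of the even part [A^#_0 = A_0 + F 1] of the algebra with
   adjoined unit [e], and [ev] that of [A_0]. *)
Section Unitization.
Variables (F : fieldType) (I : Type) (mul : (I -> F) -> (I -> F) -> I -> F).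
Variables (e : I -> F) (ev ev1 od : (I -> F) -> Prop).
Hypothesis mul1x : forall x, mul e x = x.
Hypothesis mulx1 : forall x, mul x e = x.
Hypothesis mul_lincombl : forall c x y z,
  mul (lincomb c x y) z = lincomb c (mul x z) (mul y z).
Hypothesis mul_lincombr : forall c x y z,
  mul z (lincomb c x y) = lincomb c (mul z x) (mul z y).
Hypothesis ev1_unit : ev1 e.
Hypothesis ev_ev1 : forall x, ev x -> ev1 x.
Hypothesis ev1_split : forall x, ev1 x -> exists c a, ev a /\ x = lincomb c e a.
Local Open Scope ring_scope.

Section Family.
Variables (k l r : nat) (f : 'I_r -> Defs.poly F).
Hypothesis f_ml : forall i, multilin (k + l)%nat (f i).

Lemma perm_leaves_f i ct :
  ct \in f i -> perm_eq (leaves ct.2) (iota 0 (k + l)%nat).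
Proof. by have /allP := f_ml i; apply. Qed.

Definition eval_comb (lam : 'I_r -> F) s o :=
  \sum_(i < r) lam i * evalp mul s (f i) o.

Lemma eval_comb_upd_lincomb lam s v c x y o : (v < k + l)%nat ->
  eval_comb lam (upd s v (lincomb c x y)) o =
  c * eval_comb lam (upd s v x) o + eval_comb lam (upd s v y) o.
Proof.
move=> lt_v; rewrite /eval_comb /evalp mulr_sumr -big_split.
apply: eq_bigr => i _.
rewrite !mulr_sumr -big_split; apply: eq_big_seq => ct ct_in /=.
rewrite evalm_upd_lincomb // /lincomb; first ring.
rewrite (permP (perm_leaves_f ct_in)) count_uniq_mem ?iota_uniq //.
by rewrite mem_iota lt_v.
Qed.

Lemma graded_subst_upd s v x : graded_subst ev1 od k l s -> (v < k)%nat ->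
  ev1 x -> graded_subst ev1 od k l (upd s v x).
Proof.
move=> [s_ev s_od] lt_v ev1_x; split=> i i_lt; rewrite /upd; case: eqP => [ei|_].
- by [].
- exact: s_ev.
- by move: i_lt; rewrite ei; lia.
- exact: s_od.
Qed.

Definition split_subst s := forall i, (i < k)%nat -> s i = e \/ ev (s i).

(* Multilinearity in the even variables: an element of [ev1] is [c e + a]. *)
Lemma eval_comb_eq0_of_split lam :
  (forall s, graded_subst ev1 od k l s -> split_subst s ->
     forall o, eval_comb lam s o = 0) ->
  forall s, graded_subst ev1 od k l s -> forall o, eval_comb lam s o = 0.
Proof.
move=> split_eq0.
suff eq0_above p : (p <= k)%nat -> forall s, graded_subst ev1 od k l s ->
    (forall i, (p <= i < k)%nat -> s i = e \/ ev (s i)) ->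
    forall o, eval_comb lam s o = 0.
  by move=> s s_gr; apply: (eq0_above k) => // i; lia.
elim: p => [_ s s_gr s_split|p ih lt_pk s s_gr s_split o].
  by apply: split_eq0 => // i; apply: s_split.
have [c [a [ev_a s_p]]] : exists c a, ev a /\ s p = lincomb c e a.
  by apply: ev1_split; case: s_gr => s_ev _; apply: s_ev.
have split_upd x : x = e \/ ev x ->
    forall i, (p <= i < k)%nat -> upd s p x i = e \/ ev (upd s p x i).
  move=> x_split i i_lt; rewrite /upd; case: eqP => [//|ne_ip].
  by apply: s_split; move: i_lt ne_ip; lia.
rewrite -(upd_id s p) s_p eval_comb_upd_lincomb; last lia.
rewrite (ih (ltnW lt_pk) _ (graded_subst_upd s_gr lt_pk ev1_unit)); last first.
  by apply: split_upd; left.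
rewrite (ih (ltnW lt_pk) _ (graded_subst_upd s_gr lt_pk (ev_ev1 ev_a))).
  by rewrite mulr0 addr0.
by apply: split_upd; right.
Qed.

Definition of_type (T : {set 'I_k}) s := graded_subst ev1 od k l s /\
  forall x : 'I_k, if x \in T then ev (s x) else s x = e.

Lemma of_type_unit (T : {set 'I_k}) s i : of_type T s -> ~~ kept T i -> s i = e.
Proof.
move=> [_ s_T]; rewrite /kept negb_or -ltnNge => /andP [notT lt_ik].
by have := s_T (Ordinal lt_ik); rewrite -memT_ord /= (negbTE notT).
Qed.

Lemma evalm_of_type (T : {set 'I_k}) s t :
  of_type T s -> evalm mul s t =
  if prune (kept T) t is Some t' then evalm mul s t' else e.
Proof. by move=> s_T; apply: evalm_prune => // i _; apply: of_type_unit. Qed.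

Lemma prune_kept (T : {set 'I_k}) t : (0 < #|T| + l)%nat ->
  perm_eq (leaves t) (iota 0 (k + l)%nat) ->
  exists2 t', prune (kept T) t = Some t' & perm_eq (leaves t') (kept_vars l T).
Proof.
move=> Tl_gt0 /(perm_leaves_prune (kept T)).
case: (prune (kept T) t) => [t' perm_t'|none_kept]; first by exists t'.
by move: Tl_gt0; rewrite -(size_kept_vars l T) /kept_vars none_kept.
Qed.

Lemma evalp_of_type_trivial (T : {set 'I_k}) s i o :
  (#|T| + l = 0)%nat -> of_type T s ->
  evalp mul s (f i) o = (\sum_(ct <- f i) ct.1) * e o.
Proof.
move=> Tl_eq0 s_T; rewrite /evalp big_distrl; apply: eq_big_seq => ct ct_in /=.
have := perm_leaves_prune (kept T) (perm_leaves_f ct_in).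
rewrite (evalm_of_type _ s_T); case: (prune (kept T) ct.2) => [t'|] // perm_t'.
have := perm_size perm_t'; rewrite -/(kept_vars l T) size_kept_vars Tl_eq0.
by have := size_leaves_gt0 t'; case: (size (leaves t')).
Qed.

Definition squeeze_poly (T : {set 'I_k}) (p : Defs.poly F) : Defs.poly F :=
  [seq (ct.1, relabel (squeeze T) (odflt ct.2 (prune (kept T) ct.2))) | ct <- p].

Lemma multilin_squeeze_poly (T : {set 'I_k}) i : (0 < #|T| + l)%nat ->
  multilin (#|T| + l)%nat (squeeze_poly T (f i)).
Proof.
move=> Tl_gt0; rewrite /multilin all_map; apply/allP => ct ct_in /=.
have [t' -> perm_t'] := prune_kept Tl_gt0 (perm_leaves_f ct_in).
rewrite leaves_relabel /=; apply: perm_trans (perm_map _ perm_t') _.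
by rewrite map_squeeze -size_filter -/(kept_vars l T) size_kept_vars.
Qed.

Lemma evalp_squeeze_poly (T : {set 'I_k}) s i o :
  (0 < #|T| + l)%nat -> of_type T s ->
  evalp mul s (f i) o =
  evalp mul (fun x => s (unsqueeze l T x)) (squeeze_poly T (f i)) o.
Proof.
move=> Tl_gt0 s_T; rewrite /evalp big_map; apply: eq_big_seq => ct ct_in /=.
have [t' prune_t' perm_t'] := prune_kept Tl_gt0 (perm_leaves_f ct_in).
rewrite (evalm_of_type _ s_T) prune_t' evalm_relabel /=.
suff -> : evalm mul (fun x => s (unsqueeze l T (squeeze T x))) t' =
  evalm mul s t' by [].
apply: eq_evalm => x x_in; rewrite squeezeK //.
by rewrite (perm_mem perm_t') in x_in.
Qed.

Lemma graded_subst_unsqueeze (T : {set 'I_k}) s : of_type T s ->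
  graded_subst ev od #|T| l (fun x => s (unsqueeze l T x)).
Proof.
move=> [[_ s_od] s_T]; split=> x x_lt; last exact/s_od/unsqueeze_odd.
have memT_x := memT_unsqueeze l x_lt.
by have := s_T (Ordinal (memT_lt memT_x)); rewrite -memT_ord /= memT_x.
Qed.

Lemma of_type_relations (T : {set 'I_k}) :
  exists2 D, (D <= (#|T| + l == 0) + codim mul ev od #|T| l)%nat &
  exists M : 'I_r -> 'I_D -> F, forall lam,
    (forall j, \sum_(i < r) lam i * M i j = 0) ->
    forall s, of_type T s -> forall o, eval_comb lam s o = 0.
Proof.
have [Tl_eq0|Tl_gt0] := posnP (#|T| + l)%nat.
  exists 1%nat; first exact: leq_addr.
  exists (fun i _ => \sum_(ct <- f i) ct.1) => lam lam_rel s s_T o.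
  rewrite /eval_comb.
  under eq_bigr do rewrite (evalp_of_type_trivial _ _ Tl_eq0 s_T) mulrA.
  by rewrite -big_distrl /= (lam_rel ord0) mul0r.
have [[g g_indep] g_max] := codimP mul ev od #|T| l.
have [C C_span] := choice (fun i (c : 'I_(codim mul ev od #|T| l) -> F) =>
  forall s, graded_subst ev od #|T| l s -> forall o,
    evalp mul s (squeeze_poly T (f i)) o = \sum_j c j * evalp mul s (g j) o)
  (fun i => indep_maximal_span g_indep g_max (multilin_squeeze_poly i Tl_gt0)).
exists (codim mul ev od #|T| l); first exact: leq_addl.
exists C => lam lam_rel s s_T o; rewrite /eval_comb.
have s_gr := graded_subst_unsqueeze s_T.
under eq_bigr do rewrite (evalp_squeeze_poly _ _ Tl_gt0 s_T) (C_span _ _ s_gr)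
  big_distrr.
rewrite exchange_big big1 //= => j _.
under eq_bigr do rewrite mulrA.
by rewrite -big_distrl /= lam_rel mul0r.
Qed.

(* The summand [#|T| + l == 0] accounts for constants: [P_{0,0} = 0], but a
   polynomial with all its variables set to [e] evaluates to a multiple of [e]. *)
Lemma indep_mod_id_unitization_le :
  indep_mod_id mul ev1 od k l f ->
  (r <= \sum_(T : {set 'I_k}) ((#|T| + l == 0) + codim mul ev od #|T| l))%nat.
Proof.
move=> [_ f_indep].
pose rel_spec (T : {set 'I_k}) (DM : {D : nat & 'I_r -> 'I_D -> F}) :=
  (tag DM <= (#|T| + l == 0) + codim mul ev od #|T| l)%nat /\
  forall lam, (forall j, \sum_(i < r) lam i * tagged DM i j = 0) ->
    forall s, of_type T s -> forall o, eval_comb lam s o = 0.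
have [DM DM_spec] : exists DM, forall T, rel_spec T (DM T).
  apply: choice => T; have [D le_D [M M_rel]] := of_type_relations T.
  by exists (Tagged (fun D => 'I_r -> 'I_D -> F) M).
pose J := {T : {set 'I_k} & 'I_(tag (DM T))}.
rewrite leqNgt; apply/negP => lt_r.
have card_lt : (#|{: J}| < r)%nat.
  apply: leq_ltn_trans lt_r; rewrite card_tagged sumnE big_map big_enum /=.
  by apply: leq_sum => T _; rewrite card_ord; case: (DM_spec T).
have [lam [i0 lam_i0] lam_rel] := nontrivial_relation_of_card_lt
  (fun i (p : J) => tagged (DM (tag p)) i (tagged p)) card_lt.
move/eqP: lam_i0; apply; apply: f_indep.
move=> s0 s0_gr o0; apply: (eval_comb_eq0_of_split _ s0_gr) => s s_gr s_split o.
pose T := [set x : 'I_k | pb (ev (s x))].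
have s_T : of_type T s.
  split=> // x; rewrite inE; case: ifP => [/pbE //|/negP ev_x].
  by case: (s_split x (ltn_ord x)) => // /(proj2 (pbE _)).
case: (DM_spec T) => _; apply=> // j.
exact: (lam_rel (Tagged (fun T => 'I_(tag (DM T))) j)).
Qed.

End Family.

Lemma codim_unitization_le k l : (codim mul ev1 od k l <=
  \sum_(T : {set 'I_k}) ((#|T| + l == 0) + codim mul ev od #|T| l))%nat.
Proof.
have [[g [g_ml g_indep]] _] := codimP mul ev1 od k l.
exact: indep_mod_id_unitization_le.
Qed.

Lemma codim_gr_unitization_le n : (codim_gr mul ev1 od n <=
  \sum_(k < n.+1) \sum_(j < k.+1)
    ((j + (n - k) == 0) +
     'C(n, j + (n - k)) * codim_gr mul ev od (j + (n - k))))%nat.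
Proof.
rewrite {1}/codim_gr; apply: leq_sum => k _.
have le_kn : (k <= n)%nat by rewrite -ltnS.
apply: leq_trans (leq_mul (leqnn _) (codim_unitization_le k (n - k))) _.
rewrite (sum_set_card k
  (fun j => (j + (n - k) == 0) + codim mul ev od j (n - k)))%nat.
rewrite big_distrr /=; apply: leq_sum => j _.
have le_jk : (j <= k)%nat by rewrite -ltnS.
rewrite mulnA bin_mul_bin ?le_jk // mulnDr; apply: leq_add.
  case: eqP => [t_eq0|_]; last by rewrite !muln0.
  by rewrite t_eq0 (_ : nat_of_ord j = 0%nat) ?bin0 //; lia.
rewrite -mulnA leq_mul2l; apply/orP; right.
exact: codim_le_codim_gr.
Qed.

End Unitization.

Section AdjoinedUnit.
Variables (F : fieldType) (m : nat) (w : nat -> bool).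
Local Open Scope ring_scope.
Local Notation mulA := (@Defs.mulA F m w).
Local Notation mulS := (@mulS F m w).

Definition unitS : option bas -> F := fun o => if o is None then 1 else 0.

Lemma mulA0x v c : mulA (fun _ => 0) v c = 0 :> F.
Proof. by case: c => // i j /=; rewrite !mul0r !if_same. Qed.

Lemma mulAx0 v c : mulA v (fun _ => 0) c = 0 :> F.
Proof. by case: c => // i j /=; rewrite !mulr0 !if_same. Qed.

Lemma mulS1x x : mulS unitS x = x.
Proof.
apply: functional_extensionality => [[c|]] /=; last by rewrite mul1r.
by rewrite mulA0x mul1r mulr0 !addr0.
Qed.

Lemma mulSx1 x : mulS x unitS = x.
Proof.
apply: functional_extensionality => [[c|]] /=; last by rewrite mulr1.
by rewrite mulAx0 mul1r mulr0 add0r addr0.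
Qed.

Lemma mulA_lincombl c x y z o : mulA (lincomb c x y) z o =
  c * mulA x z o + mulA y z o.
Proof.
case: o => [||i j] /=; rewrite /lincomb ?mulr0 ?addr0 //.
by do 2?case: ifP => _; ring.
Qed.

Lemma mulA_lincombr c x y z o : mulA z (lincomb c x y) o =
  c * mulA z x o + mulA z y o.
Proof.
case: o => [||i j] /=; rewrite /lincomb ?mulr0 ?addr0 //.
by do 2?case: ifP => _; ring.
Qed.

Lemma mulS_lincombl c x y z :
  mulS (lincomb c x y) z = lincomb c (mulS x z) (mulS y z).
Proof.
apply: functional_extensionality => [[b|]]; rewrite /lincomb /=; last ring.
rewrite (mulA_lincombl c (fun b => x (Some b)) (fun b => y (Some b))); ring.
Qed.

Lemma mulS_lincombr c x y z :
  mulS z (lincomb c x y) = lincomb c (mulS z x) (mulS z y).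
Proof.
apply: functional_extensionality => [[b|]]; rewrite /lincomb /=; last ring.
rewrite (mulA_lincombr c (fun b => x (Some b)) (fun b => y (Some b))); ring.
Qed.

Lemma inAs0_unit : inAs0 m w unitS.
Proof. by split=> //; exists 0%nat => i j; rewrite eqxx. Qed.

Lemma inAs0_inA0 (x : option bas -> F) : inA0 m w x -> inAs0 m w x.
Proof. by case. Qed.

Lemma inAs0_split (x : option bas -> F) : inAs0 m w x ->
  exists c a, inA0 m w a /\ x = lincomb c unitS a.
Proof.
move=> [x_b [N x_z]]; exists (x None), (fun o => if o is None then 0 else x o).
split; first by split=> //; split=> //; exists N.
by apply: functional_extensionality => [[b|]]; rewrite /lincomb /=; ring.
Qed.

End AdjoinedUnit.

Section RootAsymptotics.
Local Open Scope R_scope.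

Lemma nroot_ge0 n c : 0 <= nroot n c.
Proof. by rewrite /nroot; case: (Nat.eqb c 0); [lra|left; apply: exp_pos]. Qed.

Lemma pow_ge_of_nroot_le n c q : (0 < n)%nat -> nroot n c <= q -> INR c <= q ^ n.
Proof.
move=> n_gt0; rewrite /nroot; case: Nat.eqb_spec => [-> q_ge0|c_neq0 le_q].
  by apply: pow_le.
have c_gt0 : 0 < INR c by apply: lt_0_INR; lia.
have n_neq0 : INR n <> 0 by apply: not_0_INR; lia.
have -> : INR c = Rpower (INR c) (/ INR n) ^ n.
  by rewrite -Rpower_pow ?Rpower_mult ?Rinv_l ?Rpower_1 //; apply: exp_pos.
by apply: pow_incr; split=> //; left; apply: exp_pos.
Qed.

Lemma nroot_le_of_pow_ge n c y :
  (0 < n)%nat -> 0 < y -> INR c <= y ^ n -> nroot n c <= y.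
Proof.
move=> n_gt0 y_gt0 le_c; rewrite /nroot; case: Nat.eqb_spec => [_|c_neq0].
  exact: Rlt_le.
have c_gt0 : 0 < INR c by apply: lt_0_INR; lia.
have n_neq0 : INR n <> 0 by apply: not_0_INR; lia.
apply: Rle_trans (Rle_Rpower_l _ _ (/ INR n) _ (conj c_gt0 le_c)) _.
  by left; apply: Rinv_0_lt_compat; apply: lt_0_INR; lia.
by rewrite -Rpower_pow // Rpower_mult Rinv_r // Rpower_1 //; lra.
Qed.

Lemma bin_mul_pow_le n t q : 0 <= q -> INR 'C(n, t) * q ^ t <= (1 + q) ^ n.
Proof.
move=> q_ge0; elim: n t => [|n ih] [|t].
- by rewrite bin0 /=; lra.
- by rewrite bin0n /=; have := pow_le q t.+1 q_ge0; nra.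
- by rewrite bin0 /=; have := pow_R1_Rle (1 + q) n.+1; simpl; lra.
rewrite binS plus_INR /=; have := ih t; have := ih t.+1; simpl.
by have := pow_le q t q_ge0; have := pow_le (1 + q) n; nra.
Qed.

Lemma INR_sum_le n (g : 'I_n -> nat) B :
  (forall i, INR (g i) <= B) -> INR (\sum_(i < n) g i)%nat <= INR n * B.
Proof.
elim: n g => [|n ih] g le_g; first by rewrite big_ord0 /=; lra.
rewrite big_ord_recr plus_INR S_INR /= Rmult_plus_distr_r Rmult_1_l.
exact: Rplus_le_compat (ih _ (fun i => le_g _)) (le_g _).
Qed.

(* Finitely many initial terms are absorbed by the constant [K]. *)
Lemma pow_bound_of_eventually q N (u : nat -> R) : 0 < q ->
  (forall t, (N <= t)%nat -> u t <= q ^ t) ->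
  exists K, 1 <= K /\ forall t, u t <= K * q ^ t.
Proof.
move=> q_gt0; elim: N u => [|N ih] u u_le.
  by exists 1; split=> [|t]; [lra|rewrite Rmult_1_l; apply: u_le].
have [|K [K_ge1 K_bound]] := ih (fun t => if t == N then q ^ t else u t).
  move=> t le_Nt; case: eqP => [_|neq_tN]; first lra.
  by apply: u_le; move: le_Nt neq_tN; lia.
have qN_gt0 : 0 < q ^ N by apply: pow_lt.
have uN_ge0 : 0 <= Rabs (u N) / q ^ N.
  by apply: Rmult_le_pos; [apply: Rabs_pos|left; apply: Rinv_0_lt_compat].
exists (K + Rabs (u N) / q ^ N); split=> [|t]; first lra.
have qt_ge0 := pow_le q t (Rlt_le _ _ q_gt0).
have := K_bound t; case: eqP => [->|_] u_t; last nra.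
have : Rabs (u N) / q ^ N * q ^ N = Rabs (u N).
  by rewrite /Rdiv Rmult_assoc Rinv_l ?Rmult_1_r //; lra.
by have := Rle_abs (u N); nra.
Qed.

Lemma INR_bin3 p :
  INR 'C(p.+3, 3) * 6 = (INR p + 3) * (INR p + 2) * (INR p + 1).
Proof.
have : ('C(p.+3, 3) * 6 = (p + 3) * (p + 2) * (p + 1))%nat.
  by rewrite (_ : 6 = 3`!)%nat // bin_ffact !ffactnS ffactn0 /=; lia.
move: 'C(p.+3, 3) => C /(f_equal INR).
rewrite -!multE -!plusE !mult_INR !plus_INR.
have -> : INR 6 = 6 by simpl; lra.
have -> : INR 3 = 3 by simpl; lra.
have -> : INR 2 = 2 by simpl; lra.
by rewrite INR_1; lra.
Qed.

(* [(1 + d) ^ n >= 'C(n, 3) d ^ 3] eventually beats any quadratic. *)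
Lemma quadratic_le_pow M d : 0 < M -> 0 < d ->
  exists N, forall n, (N <= n)%nat -> M * (INR n + 1) ^ 2 <= (1 + d) ^ n.
Proof.
move=> M_gt0 d_gt0; have d3_gt0 : 0 < d ^ 3 by apply: pow_lt.
have [N0 N0_large] := INR_archimed (d ^ 3) (18 * M) (Rlt_gt _ _ d3_gt0).
exists (N0 + 5)%nat => n le_n; have -> : n = (n - 3).+3 by lia.
set p := (n - 3)%nat; have le_p : (N0 + 2 <= p)%nat by rewrite /p; lia.
have x_large : INR N0 + 2 <= INR p.
  by have := le_INR _ _ (ssrnat.leP le_p); rewrite plus_INR /=; lra.
have := bin_mul_pow_le p.+3 3 (Rlt_le _ _ d_gt0); have := INR_bin3 p.
have N0_ge0 := pos_INR N0; rewrite !S_INR.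
set x := INR p in x_large *; set C := INR 'C(p.+3, 3).
move=> C_eq C_le.
have sq_le : (x + 4) ^ 2 <= 3 * ((x + 2) * (x + 1)) by simpl; nra.
have M_le : 18 * M <= (x + 3) * d ^ 3 by nra.
have : 6 * M * (x + 4) ^ 2 <= (x + 3) * (x + 2) * (x + 1) * d ^ 3.
  have : 18 * M * ((x + 2) * (x + 1)) <= (x + 3) * d ^ 3 * ((x + 2) * (x + 1)).
    by apply: Rmult_le_compat_r; nra.
  nra.
by rewrite (_ : x + 1 + 1 + 1 + 1 = x + 4); [nra|lra].
Qed.

Lemma lim_root_ge0 a L : lim_root a L -> 0 <= L.
Proof.
move=> a_cv; apply: Rnot_lt_le => L_lt0.
have [N N_close] := a_cv (- L) ltac:(lra).
have := N_close N (Nat.le_refl N); rewrite /R_dist.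
by have := Rle_abs (nroot N (a N) - L); have := nroot_ge0 N (a N); lra.
Qed.

Lemma pow_bound_of_lim_root a L q : lim_root a L -> L < q ->
  exists K, 1 <= K /\ forall t, INR (a t) <= K * q ^ t.
Proof.
move=> a_cv lt_Lq; have := lim_root_ge0 a_cv => L_ge0.
have [N N_close] := a_cv (q - L) ltac:(lra).
apply: (@pow_bound_of_eventually q N.+1); first lra.
move=> t le_t; apply: pow_ge_of_nroot_le; first by case: t le_t.
have := N_close t ltac:(apply/leP; lia); rewrite /R_dist.
by have := Rle_abs (nroot t (a t) - L); lra.
Qed.

Lemma limsup_root_le_of_bound c M Q : 0 < M -> 0 < Q ->
  (forall n, INR (c n) <= M * (INR n + 1) ^ 2 * Q ^ n) ->
  forall e, 0 < e -> exists N, forall n, (N <= n)%nat -> nroot n (c n) <= Q + e.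
Proof.
move=> M_gt0 Q_gt0 c_le e e_gt0.
have [N N_large] := quadratic_le_pow M_gt0 (Rdiv_lt_0_compat _ _ e_gt0 Q_gt0).
exists N.+1 => n le_n; apply: nroot_le_of_pow_ge; [by case: n le_n|lra|].
have -> : Q + e = (1 + e / Q) * Q.
  by rewrite /Rdiv Rmult_plus_distr_r Rmult_assoc Rinv_l; lra.
rewrite Rpow_mult_distr; apply: Rle_trans (c_le n) _.
apply: Rmult_le_compat_r; first by apply: pow_le; lra.
by apply: N_large; lia.
Qed.

Lemma limsup_root_le_add1 (a c : nat -> nat) L :
  (forall n, c n <= \sum_(k < n.+1) \sum_(j < k.+1)
     ((j + (n - k) == 0) + 'C(n, j + (n - k)) * a (j + (n - k))))%nat ->
  lim_root a L -> limsup_root_le c (L + 1).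
Proof.
move=> c_le a_cv eps eps_gt0; have L_ge0 := lim_root_ge0 a_cv.
pose q := L + eps / 2.
have [K [K_ge1 a_le]] :=
  pow_bound_of_lim_root (q := q) a_cv ltac:(rewrite /q; lra).
have pow_ge1 n : 1 <= (1 + q) ^ n by apply: pow_R1_Rle; rewrite /q; lra.
have term_le n t : (t <= n)%nat ->
    INR ((t == 0%nat) + 'C(n, t) * a t)%nat <= (1 + K) * (1 + q) ^ n.
  move=> le_tn; rewrite -multE -plusE plus_INR mult_INR.
  have : INR (t == 0%nat) <= 1 by case: (t == 0%nat) => /=; lra.
  have := bin_mul_pow_le n t (ltac:(rewrite /q; lra) : 0 <= q).
  have := Rmult_le_compat_l _ _ _ (pos_INR 'C(n, t)) (a_le t).
  by have := pow_ge1 n; nra.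
have c_bound n : INR (c n) <= (1 + K) * (INR n + 1) ^ 2 * (1 + q) ^ n.
  apply: Rle_trans (le_INR _ _ (ssrnat.leP (c_le n))) _.
  apply: Rle_trans (INR_sum_le (B := (INR n + 1) * ((1 + K) * (1 + q) ^ n)) _) _.
    move=> k; apply: Rle_trans (INR_sum_le _) _ => [j|].
      by apply: term_le; have := ltn_ord j; have := ltn_ord k; lia.
    apply: Rmult_le_compat_r; first by have := pow_ge1 n; nra.
    by have := le_INR _ _ (ssrnat.leP (ltn_ord k)); rewrite !S_INR; lra.
  by rewrite S_INR /=; lra.
have [|||N N_le] := limsup_root_le_of_bound _ _ c_bound (e := eps / 2); try lra.
  by rewrite /q; lra.
by exists N => n /N_le; rewrite /q; lra.
Qed.

End RootAsymptotics.

Theorem lemma10 (F : fieldType) (charF0 : GRing.pchar F =i pred0)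
  (m : nat) (w : nat -> bool) (hm : (2 <= m)%N)
  (hw : periodic_word w \/ sturmian_word w) :
  forall L : R,
    lim_root (codim_gr (@mulS F m w) (inA0 m w) (inA1 m w)) L ->
    limsup_root_le (codim_gr (@mulS F m w) (inAs0 m w) (inA1 m w)) (L + 1)%R.
Proof.
move=> L; apply: limsup_root_le_add1 => n.
apply: (codim_gr_unitization_le (e := unitS F)).
- exact: mulS1x.
- exact: mulSx1.
- exact: mulS_lincombl.
- exact: mulS_lincombr.
- exact: inAs0_unit.
- exact: inAs0_inA0.
- exact: inAs0_split.
Qed.
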